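(* Let $\boldsymbol{x}\in\mathbb{T}^3$ and $\boldsymbol{v}\in\mathbb{S}^2$, and for $\underline{\omega}=(\omega_1,\omega_2,\dots)$ with $\omega_i\in\Omega_0$ define $\boldsymbol{x}_0=\boldsymbol{x}$, $\boldsymbol{v}_0=\boldsymbol{v}$ and recursively $\boldsymbol{x}_n=f_{\omega_n}(\boldsymbol{x}_{n-1})$, $\boldsymbol{v}_n=\dfrac{D_{\boldsymbol{x}_{n-1}}f_{\omega_n}\boldsymbol{v}_{n-1}}{|D_{\boldsymbol{x}_{n-1}}f_{\omega_n}\boldsymbol{v}_{n-1}|}$. Then: (1) there exist $N_1\in\mathbb{N}$ and $(\omega_1,\dots,\omega_{N_1})\in\Omega_0^{N_1}$ such that $\boldsymbol{v}_{N_1}=(1,0,0)$; (2) if $\boldsymbol{v}=(1,0,0)$, then for any $\overline{\boldsymbol{v}}\in\mathbb{S}^2$ there exist $N_2\in\mathbb{N}$ and $(\omega_1,\dots,\omega_{N_2})\in\Omega_0^{N_2}$ such that $\boldsymbol{v}_{N_2}=\overline{\boldsymbol{v}}$.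
   Context: $\mathbb{T}^3=\mathbb{R}^3/(2\pi\mathbb{Z})^3$ with points $\boldsymbol{x}=(x,y,z)$; $\mathbb{S}^2$ is the unit sphere in $\mathbb{R}^3$. Fix $U>0$ and let $\Omega_0=[-U,U]^3\times[0,2\pi)^3$, with elements $\omega=(\mathsf{A},\mathsf{B},\mathsf{C},\alpha,\beta,\gamma)$. Define maps of $\mathbb{T}^3$: $f_{(\mathsf{A},\alpha)}(x,y,z)=(x+\mathsf{A}\sin(z+\alpha),\ y+\mathsf{A}\cos(z+\alpha),\ z)$, $f_{(\mathsf{B},\beta)}(x,y,z)=(x,\ y+\mathsf{B}\sin(x+\beta),\ z+\mathsf{B}\cos(x+\beta))$, $f_{(\mathsf{C},\gamma)}(x,y,z)=(x+\mathsf{C}\cos(y+\gamma),\ y,\ z+\mathsf{C}\sin(y+\gamma))$, and $f_\omega=f_{(\mathsf{C},\gamma)}\circ f_{(\mathsf{B},\beta)}\circ f_{(\mathsf{A},\alpha)}$; $D_{\boldsymbol{x}}f_\omega$ is the Jacobian matrix of $f_\omega$ at $\boldsymbol{x}$. *)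

From Stdlib Require Import Reals List.
From Coquelicot Require Import Coquelicot.
Open Scope R_scope.

(* Points of R^3 (lifts of points of T^3) and tangent vectors. *)
Definition vec : Type := (R * R * R)%type.

Definition coord (i : nat) (p : vec) : R :=
  match p with (a, b, c) => match i with 0%nat => a | 1%nat => b | _ => c end end.

Definition vadd (p q : vec) : vec :=
  (coord 0 p + coord 0 q, coord 1 p + coord 1 q, coord 2 p + coord 2 q).
Definition vscale (t : R) (p : vec) : vec :=
  (t * coord 0 p, t * coord 1 p, t * coord 2 p).

Definition ej (j : nat) : vec :=
  match j with 0%nat => (1, 0, 0) | 1%nat => (0, 1, 0) | _ => (0, 0, 1) end.

Definition norm3 (v : vec) : R :=
  sqrt (coord 0 v ^ 2 + coord 1 v ^ 2 + coord 2 v ^ 2).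

Definition normalize (v : vec) : vec := vscale (/ norm3 v) v.

Definition jac (f : vec -> vec) (p : vec) (i j : nat) : R :=
  Derive (fun t => coord i (f (vadd p (vscale t (ej j))))) 0.

Definition jac_apply (f : vec -> vec) (p v : vec) : vec :=
  let row i := jac f p i 0 * coord 0 v + jac f p i 1 * coord 1 v
               + jac f p i 2 * coord 2 v in
  (row 0%nat, row 1%nat, row 2%nat).

Record omega : Type := mkOmega
  { oA : R; oB : R; oC : R; oal : R; obe : R; oga : R }.

Definition in_Omega0 (U : R) (w : omega) : Prop :=
  -U <= oA w <= U /\ -U <= oB w <= U /\ -U <= oC w <= U /\
  0 <= oal w < 2 * PI /\ 0 <= obe w < 2 * PI /\ 0 <= oga w < 2 * PI.

Definition fA (A al : R) (p : vec) : vec :=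
  match p with (x, y, z) => (x + A * sin (z + al), y + A * cos (z + al), z) end.
Definition fB (B be : R) (p : vec) : vec :=
  match p with (x, y, z) => (x, y + B * sin (x + be), z + B * cos (x + be)) end.
Definition fC (C ga : R) (p : vec) : vec :=
  match p with (x, y, z) => (x + C * cos (y + ga), y, z + C * sin (y + ga)) end.

Definition f_omega (w : omega) (p : vec) : vec :=
  fC (oC w) (oga w) (fB (oB w) (obe w) (fA (oA w) (oal w) p)).

Definition step (w : omega) (s : vec * vec) : vec * vec :=
  (f_omega w (fst s), normalize (jac_apply (f_omega w) (fst s) (snd s))).

Definition run (ws : list omega) (s : vec * vec) : vec * vec :=
  fold_left (fun s w => step w s) ws s.

(* At a point whose [z]-coordinate satisfies [z + alpha = 0 (mod 2 pi)], the map [f_(A,alpha)]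
   fixes [z] and has the constant derivative [v |-> v + A v_z e_x]; repeating it [n] times
   therefore applies the shear [v |-> v + n A v_z e_x] to the tangent vector, and by choosing
   [n] large any shear amount is reached while [|A| <= U].  The same trick with [f_(B,beta)]
   (phases [0] and [pi/2]) and [f_(C,gamma)] (phase [pi/2]) gives the shears
   [v_y += t v_x], [v_z += t v_x] and [v_x += t v_y] for every real [t].  Since the directions
   are only followed up to positive scaling, it remains to connect any nonzero vector to [e_x]
   and back by these four families of elementary row operations. *)
From Stdlib Require Import Reals Lra FunctionalExtensionality.
From Coquelicot Require Import Coquelicot.
(* Imported after Coquelicot so that [Forall] denotes the list predicate. *)
From Stdlib Require Import List.
Open Scope R_scope.

Lemma vec_eq (a b c a' b' c' : R) :
  a = a' -> b = b' -> c = c' -> ((a, b, c) : vec) = (a', b', c').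
Proof. now intros -> -> ->. Qed.

Ltac vec_ring :=
  repeat match goal with u : vec |- _ => destruct u as [[? ?] ?] end;
  unfold vadd, vscale; cbn [coord]; apply vec_eq; ring.

Lemma coord_vscale j c u : coord j (vscale c u) = c * coord j u.
Proof. destruct j as [|[|j]]; destruct u as [[? ?] ?]; reflexivity. Qed.

Lemma coord_vadd j u w : coord j (vadd u w) = coord j u + coord j w.
Proof. destruct j as [|[|j]]; destruct u as [[? ?] ?], w as [[? ?] ?]; reflexivity. Qed.

Lemma norm3_eq0 a b c : norm3 (a, b, c) = 0 -> (a, b, c) = (0, 0, 0).
Proof.
  unfold norm3; cbn [coord]; intro H.
  apply sqrt_eq_0 in H; [apply vec_eq; nra | nra].
Qed.

Lemma norm3_vscale c u : 0 < c -> norm3 (vscale c u) = c * norm3 u.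
Proof.
  intro Hc; destruct u as [[a b] d]; unfold norm3, vscale; cbn [coord].
  replace ((c * a) ^ 2 + (c * b) ^ 2 + (c * d) ^ 2)
    with ((c * c) * (a ^ 2 + b ^ 2 + d ^ 2)) by ring.
  rewrite sqrt_mult, sqrt_square by nra. reflexivity.
Qed.

Lemma norm3_unit_neq0 v : norm3 v = 1 -> v <> (0, 0, 0).
Proof.
  intros Hv ->; unfold norm3 in Hv; cbn [coord] in Hv.
  replace (0 ^ 2 + 0 ^ 2 + 0 ^ 2) with 0 in Hv by ring.
  rewrite sqrt_0 in Hv; lra.
Qed.

Lemma normalize_unit v : norm3 v = 1 -> normalize v = v.
Proof. intro Hv; unfold normalize; rewrite Hv, Rinv_1; vec_ring. Qed.

Lemma normalize_vscale c u : 0 < c -> normalize (vscale c u) = normalize u.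
Proof.
  intro Hc; destruct (Req_dec (norm3 u) 0) as [H0|H0].
  - destruct u as [[a b] d]; rewrite (norm3_eq0 _ _ _ H0).
    unfold normalize, vscale; cbn [coord]; apply vec_eq; ring.
  - unfold normalize; rewrite norm3_vscale by exact Hc.
    destruct u as [[a b] d]; unfold vscale; cbn [coord]; apply vec_eq; field; lra.
Qed.

Lemma normalize_eq_vscale u : exists c, 0 < c /\ normalize u = vscale c u.
Proof.
  destruct (Req_dec (norm3 u) 0) as [H0|H0].
  - exists 1; split; [lra|].
    destruct u as [[a b] d]; rewrite (norm3_eq0 _ _ _ H0).
    unfold normalize, vscale; cbn [coord]; apply vec_eq; ring.
  - exists (/ norm3 u); split; [|reflexivity].
    apply Rinv_0_lt_compat; pose proof (sqrt_pos (coord 0 u ^ 2 + coord 1 u ^ 2 + coord 2 u ^ 2)).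
    unfold norm3 in *; lra.
Qed.

Definition shear (i j : nat) (t : R) (u : vec) : vec :=
  vadd u (vscale (t * coord j u) (ej i)).

Lemma shear0 i j u : shear i j 0 u = u.
Proof. unfold shear; generalize (coord j u) (ej i); intros; vec_ring. Qed.

Lemma shear_shear i j t t' u :
  coord j (ej i) = 0 -> shear i j t (shear i j t' u) = shear i j (t + t') u.
Proof.
  intro Hij; unfold shear; rewrite coord_vadd, coord_vscale, Hij.
  generalize (coord j u) (ej i); intros; vec_ring.
Qed.

Lemma shear_vscale i j t c u : shear i j t (vscale c u) = vscale c (shear i j t u).
Proof. unfold shear; rewrite coord_vscale; generalize (coord j u) (ej i); intros; vec_ring. Qed.

Definition omA (s ph : R) : omega := mkOmega s 0 0 ph 0 0.
Definition omB (s ph : R) : omega := mkOmega 0 s 0 0 ph 0.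
Definition omC (s ph : R) : omega := mkOmega 0 0 s 0 0 ph.

Lemma f_omega_omA s ph : f_omega (omA s ph) = fA s ph.
Proof.
  apply functional_extensionality; intros [[x y] z].
  unfold f_omega, omA, fA, fB, fC; cbn; rewrite !Rmult_0_l, !Rplus_0_r; reflexivity.
Qed.

Lemma f_omega_omB s ph : f_omega (omB s ph) = fB s ph.
Proof.
  apply functional_extensionality; intros [[x y] z].
  unfold f_omega, omB, fA, fB, fC; cbn; rewrite !Rmult_0_l, !Rplus_0_r; reflexivity.
Qed.

Lemma f_omega_omC s ph : f_omega (omC s ph) = fC s ph.
Proof.
  apply functional_extensionality; intros [[x y] z].
  unfold f_omega, omC, fA, fB, fC; cbn; rewrite !Rmult_0_l, !Rplus_0_r; reflexivity.
Qed.

Ltac compute_derivatives :=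
  repeat match goal with |- context [Derive ?f 0] =>
    let H := fresh in
    let l := fresh "l" in
    evar (l : R);
    assert (H : is_derive f 0 l) by (subst l; auto_derive; [exact I | reflexivity]);
    rewrite (is_derive_unique f 0 l H); subst l; clear H end;
  rewrite ?Rmult_0_l, ?Rplus_0_r; apply vec_eq; ring.

Lemma jac_apply_fA a al x y z u1 u2 u3 :
  jac_apply (fA a al) (x, y, z) (u1, u2, u3) =
  (u1 + a * cos (z + al) * u3, u2 - a * sin (z + al) * u3, u3).
Proof. unfold jac_apply, jac; cbn. compute_derivatives. Qed.

Lemma jac_apply_fB b be x y z u1 u2 u3 :
  jac_apply (fB b be) (x, y, z) (u1, u2, u3) =
  (u1, u2 + b * cos (x + be) * u1, u3 - b * sin (x + be) * u1).
Proof. unfold jac_apply, jac; cbn. compute_derivatives. Qed.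

Lemma jac_apply_fC c ga x y z u1 u2 u3 :
  jac_apply (fC c ga) (x, y, z) (u1, u2, u3) =
  (u1 - c * sin (y + ga) * u2, u2, u3 + c * cos (y + ga) * u2).
Proof. unfold jac_apply, jac; cbn. compute_derivatives. Qed.

Lemma run_app ws1 ws2 s : run (ws1 ++ ws2) s = run ws2 (run ws1 s).
Proof. apply fold_left_app. Qed.

Lemma run_repeat_shear (w : omega) (P : vec -> Prop) i j s :
  coord j (ej i) = 0 ->
  (forall p, P p -> P (f_omega w p)) ->
  (forall p u, P p -> jac_apply (f_omega w) p u = shear i j s u) ->
  forall n p u, P p ->
  exists p', run (repeat w n) (p, normalize u) = (p', normalize (shear i j (INR n * s) u)).
Proof.
  intros Hij HP Hjac n; induction n as [|n IH]; intros p u Hp.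
  - exists p; cbn; rewrite Rmult_0_l, shear0; reflexivity.
  - destruct (normalize_eq_vscale u) as (c & Hc & Hu).
    destruct (IH (f_omega w p) (shear i j s u) (HP p Hp)) as [p' E].
    exists p'; change (run (repeat w (S n)) (p, normalize u))
      with (run (repeat w n) (step w (p, normalize u))).
    unfold step; cbn [fst snd].
    rewrite Hu, Hjac, shear_vscale, normalize_vscale, E, shear_shear, S_INR by assumption.
    do 3 f_equal; ring.
Qed.

Lemma cos_sin_plus_2kPI th k :
  cos (th + 2 * IZR k * PI) = cos th /\ sin (th + 2 * IZR k * PI) = sin th.
Proof.
  assert (Hs : sin (IZR k * PI) = 0) by (apply sin_eq_0_1; now exists k).
  replace (2 * IZR k * PI) with (2 * (IZR k * PI)) by ring.
  rewrite cos_plus, sin_plus, cos_2a_sin, sin_2a, Hs; split; ring.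
Qed.

Lemma exists_phase x0 th :
  exists ph, 0 <= ph < 2 * PI /\ cos (x0 + ph) = cos th /\ sin (x0 + ph) = sin th.
Proof.
  pose proof PI_RGT_0 as HPI.
  set (r := (th - x0) / (2 * PI)).
  exists (2 * PI * frac_part r); split.
  - pose proof (base_fp r); split; nra.
  - replace (x0 + 2 * PI * frac_part r) with (th + 2 * IZR (- Int_part r) * PI).
    + apply cos_sin_plus_2kPI.
    + unfold frac_part, r; rewrite opp_IZR; field; lra.
Qed.

(* Quantifying over the base point is what makes [reachable] transitive. *)
Definition reachable (U : R) (u u' : vec) : Prop :=
  forall p, exists ws, Forall (in_Omega0 U) ws /\
    exists p', run ws (p, normalize u) = (p', normalize u').

Section Reachability.

Variable U : R.
Hypothesis HU : 0 < U.

Lemma reachable_trans u1 u2 u3 :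
  reachable U u1 u2 -> reachable U u2 u3 -> reachable U u1 u3.
Proof.
  intros H12 H23 p.
  destruct (H12 p) as (ws1 & F1 & p1 & E1), (H23 p1) as (ws2 & F2 & p2 & E2).
  exists (ws1 ++ ws2); split; [now apply Forall_app|].
  exists p2; rewrite run_app, E1, E2; reflexivity.
Qed.

Lemma reachable_shear (mk : R -> R -> omega) (k i j : nat) (th : R) :
  coord j (ej i) = 0 ->
  (forall s ph, -U <= s <= U -> 0 <= ph < 2 * PI -> in_Omega0 U (mk s ph)) ->
  (forall s ph p, coord k (f_omega (mk s ph) p) = coord k p) ->
  (forall s ph p u, cos (coord k p + ph) = cos th -> sin (coord k p + ph) = sin th ->
     jac_apply (f_omega (mk s ph)) p u = shear i j s u) ->
  forall t u, reachable U u (shear i j t u).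
Proof.
  intros Hij Hin Hk Hjac t u p.
  destruct (exists_phase (coord k p) th) as (ph & Hph & Hc & Hs).
  destruct (INR_archimed U (Rabs t)) as [n Hn]; [lra|].
  pose proof (Rabs_pos t).
  assert (Hn0 : 0 < INR n) by nra.
  set (s := t / INR n).
  assert (Hns : INR n * s = t) by (unfold s; field; lra).
  assert (HsU : -U <= s <= U).
  { assert (Ht : Rabs t < INR n * U) by lra.
    apply Rabs_def2 in Ht; rewrite <- Hns in Ht; split; nra. }
  destruct (run_repeat_shear (mk s ph) (fun q => coord k q = coord k p) i j s Hij)
    with (n := n) (p := p) (u := u) as [p' E]; [| |reflexivity|].
  - intros q Hq; rewrite Hk; exact Hq.
  - intros q v Hq; apply Hjac; rewrite Hq; assumption.
  - exists (repeat (mk s ph) n); split.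
    + apply Forall_forall; intros w Hw; apply repeat_spec in Hw; subst w; auto.
    + exists p'; rewrite E, Hns; reflexivity.
Qed.

Ltac in_Omega0_elementary :=
  intros s ph Hs Hph; pose proof PI_RGT_0;
  unfold in_Omega0, omA, omB, omC; cbn; repeat split; lra.

Lemma reachable_shear_xz t u : reachable U u (shear 0 2 t u).
Proof.
  apply (reachable_shear omA 2 0 2 0); [reflexivity | in_Omega0_elementary | |].
  - intros s ph [[x y] z]; rewrite f_omega_omA; reflexivity.
  - intros s ph [[x y] z] [[u1 u2] u3] Hc Hs; cbn [coord] in Hc, Hs.
    rewrite f_omega_omA, jac_apply_fA, Hc, Hs, cos_0, sin_0.
    unfold shear, vadd, vscale; cbn [coord ej]; apply vec_eq; ring.
Qed.

Lemma reachable_shear_yx t u : reachable U u (shear 1 0 t u).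
Proof.
  apply (reachable_shear omB 0 1 0 0); [reflexivity | in_Omega0_elementary | |].
  - intros s ph [[x y] z]; rewrite f_omega_omB; reflexivity.
  - intros s ph [[x y] z] [[u1 u2] u3] Hc Hs; cbn [coord] in Hc, Hs.
    rewrite f_omega_omB, jac_apply_fB, Hc, Hs, cos_0, sin_0.
    unfold shear, vadd, vscale; cbn [coord ej]; apply vec_eq; ring.
Qed.

Lemma reachable_shear_zx t u : reachable U u (shear 2 0 t u).
Proof.
  apply (reachable_shear (fun s => omB (- s)) 0 2 0 (PI / 2));
    [reflexivity | in_Omega0_elementary | |].
  - intros s ph [[x y] z]; rewrite f_omega_omB; reflexivity.
  - intros s ph [[x y] z] [[u1 u2] u3] Hc Hs; cbn [coord] in Hc, Hs.
    rewrite f_omega_omB, jac_apply_fB, Hc, Hs, cos_PI2, sin_PI2.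
    unfold shear, vadd, vscale; cbn [coord ej]; apply vec_eq; ring.
Qed.

Lemma reachable_shear_xy t u : reachable U u (shear 0 1 t u).
Proof.
  apply (reachable_shear (fun s => omC (- s)) 1 0 1 (PI / 2));
    [reflexivity | in_Omega0_elementary | |].
  - intros s ph [[x y] z]; rewrite f_omega_omC; reflexivity.
  - intros s ph [[x y] z] [[u1 u2] u3] Hc Hs; cbn [coord] in Hc, Hs.
    rewrite f_omega_omC, jac_apply_fC, Hc, Hs, cos_PI2, sin_PI2.
    unfold shear, vadd, vscale; cbn [coord ej]; apply vec_eq; ring.
Qed.

Lemma reachable_set_x_via_z a b c a' : c <> 0 -> reachable U (a, b, c) (a', b, c).
Proof.
  intro Hc; replace (a', b, c) with (shear 0 2 ((a' - a) / c) (a, b, c)).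
  - apply reachable_shear_xz.
  - unfold shear, vadd, vscale; cbn; apply vec_eq; field; exact Hc.
Qed.

Lemma reachable_set_x_via_y a b c a' : b <> 0 -> reachable U (a, b, c) (a', b, c).
Proof.
  intro Hb; replace (a', b, c) with (shear 0 1 ((a' - a) / b) (a, b, c)).
  - apply reachable_shear_xy.
  - unfold shear, vadd, vscale; cbn; apply vec_eq; field; exact Hb.
Qed.

Lemma reachable_set_y a b c b' : a <> 0 -> reachable U (a, b, c) (a, b', c).
Proof.
  intro Ha; replace (a, b', c) with (shear 1 0 ((b' - b) / a) (a, b, c)).
  - apply reachable_shear_yx.
  - unfold shear, vadd, vscale; cbn; apply vec_eq; field; exact Ha.
Qed.

Lemma reachable_set_z a b c c' : a <> 0 -> reachable U (a, b, c) (a, b, c').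
Proof.
  intro Ha; replace (a, b, c') with (shear 2 0 ((c' - c) / a) (a, b, c)).
  - apply reachable_shear_zx.
  - unfold shear, vadd, vscale; cbn; apply vec_eq; field; exact Ha.
Qed.

Lemma reachable_to_e1 a b c : (a, b, c) <> (0, 0, 0) -> reachable U (a, b, c) (1, 0, 0).
Proof.
  intro Hnz.
  assert (Hx1 : exists b' c', reachable U (a, b, c) (1, b', c')).
  { destruct (Req_dec b 0) as [->|Hb]; [destruct (Req_dec c 0) as [->|Hc]|].
    - assert (Ha : a <> 0) by (intros ->; apply Hnz; reflexivity).
      exists 1, 0; apply reachable_trans with (a, 1, 0).
      + now apply reachable_set_y.
      + apply reachable_set_x_via_y; lra.
    - exists 0, c; now apply reachable_set_x_via_z.
    - exists b, c; now apply reachable_set_x_via_y. }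
  destruct Hx1 as (b' & c' & H1).
  apply reachable_trans with (1, b', c'); [exact H1|].
  apply reachable_trans with (1, 0, c'); [apply reachable_set_y; lra|].
  apply reachable_set_z; lra.
Qed.

Lemma reachable_from_e1 a b c : (a, b, c) <> (0, 0, 0) -> reachable U (1, 0, 0) (a, b, c).
Proof.
  intro Hnz; destruct (Req_dec b 0) as [->|Hb]; [destruct (Req_dec c 0) as [->|Hc]|].
  - assert (Ha : a <> 0) by (intros ->; apply Hnz; reflexivity).
    apply reachable_trans with (1, 1, 0); [apply reachable_set_y; lra|].
    apply reachable_trans with (a, 1, 0); [apply reachable_set_x_via_y; lra|].
    now apply reachable_set_y.
  - apply reachable_trans with (1, 0, c); [apply reachable_set_z; lra|].
    now apply reachable_set_x_via_z.
  - apply reachable_trans with (1, b, 0); [apply reachable_set_y; lra|].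
    apply reachable_trans with (1, b, c); [apply reachable_set_z; lra|].
    now apply reachable_set_x_via_y.
Qed.

End Reachability.

Lemma reachable_run U u u' x : norm3 u = 1 -> norm3 u' = 1 -> reachable U u u' ->
  exists ws, Forall (in_Omega0 U) ws /\ snd (run ws (x, u)) = u'.
Proof.
  intros Hu Hu' Hreach; destruct (Hreach x) as (ws & Hws & p' & E).
  exists ws; split; [exact Hws|].
  rewrite normalize_unit in E by exact Hu; rewrite E, normalize_unit by exact Hu'.
  reflexivity.
Qed.

Lemma norm3_e1 : norm3 (1, 0, 0) = 1.
Proof.
  unfold norm3; cbn [coord]; replace (1 ^ 2 + 0 ^ 2 + 0 ^ 2) with 1 by ring; apply sqrt_1.
Qed.

Theorem lemma3p3 (U : R) (HU : 0 < U) (x v : vec) (Hv : norm3 v = 1) :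
  (exists ws : list omega,
      Forall (in_Omega0 U) ws /\ snd (run ws (x, v)) = (1, 0, 0)) /\
  (v = (1, 0, 0) ->
   forall vb : vec, norm3 vb = 1 ->
   exists ws : list omega,
      Forall (in_Omega0 U) ws /\ snd (run ws (x, v)) = vb).
Proof.
  split.
  - apply reachable_run; [exact Hv | exact norm3_e1 |].
    destruct v as [[a b] c]; apply reachable_to_e1, norm3_unit_neq0; assumption.
  - intros -> vb Hvb; apply reachable_run; [exact norm3_e1 | exact Hvb |].
    destruct vb as [[a b] c]; apply reachable_from_e1, norm3_unit_neq0; assumption.
Qed.
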